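(* Let $q$ be a prime power and let $\xi$ be a generator of the multiplicative group $\mathbb{F}_q^*$. Let $n$ and $m$ be positive integers such that $\gcd(n,q)=1$ and $\gcd(n,q-1)=m$. Then for every positive integer $r$, the families of $\xi^{mr}$-constacyclic and cyclic codes of length $n$ over $\mathbb{F}_q$ are monomially equivalent.
   Context: For $c\in\mathbb{F}_q^*$, a linear code $C\subseteq\mathbb{F}_q^n$ is called $c$-constacyclic if for every codeword $(c_0,c_1,\ldots,c_{n-1})\in C$ we also have $(c\, c_{n-1},c_0,\ldots,c_{n-2})\in C$; cyclic codes are the $1$-constacyclic codes. An isometry of linear codes is an $\mathbb{F}_q$-linear isomorphism preserving Hamming distance (equivalently, a map given by a monomial matrix). For $a,b\in\mathbb{F}_q^*$, the families of $a$-constacyclic and $b$-constacyclic codes of length $n$ over $\mathbb{F}_q$ are called monomially equivalent if there is a one-to-one correspondence between the set of $a$-constacyclic codes and the set of $b$-constacyclic codes of length $n$ given by an isometry of linear codes. *)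

From HB Require Import structures.
From mathcomp Require Import all_boot all_order all_algebra all_fingroup all_field.
Set Implicit Arguments. Unset Strict Implicit. Unset Printing Implicit Defensive.
Import GRing.Theory.
Local Open Scope ring_scope.

Section Codes.
Variables (F : finFieldType) (n : nat).

Definition linear_code (C : {set 'rV[F]_n}) : Prop :=
  0 \in C /\ forall (a : F) (u v : 'rV[F]_n), u \in C -> v \in C -> a *: u + v \in C.

(* c-constacyclic shift: (c_0,...,c_{n-1}) |-> (c * c_{n-1}, c_0, ..., c_{n-2}).
   ord_pred i is i-1 for i>0 and n-1 for i=0. *)
Definition constashift (c : F) (v : 'rV[F]_n) : 'rV[F]_n :=
  \row_(i < n) ((if nat_of_ord i == 0%N then c else 1) * v 0 (ord_pred i)).

Definition constacyclic (c : F) (C : {set 'rV[F]_n}) : Prop :=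
  linear_code C /\ forall v, v \in C -> constashift c v \in C.

Definition hamming (u v : 'rV[F]_n) : nat := #|[set i : 'I_n | u 0 i != v 0 i]|.

Definition isometry (f : 'rV[F]_n -> 'rV[F]_n) : Prop :=
  [/\ forall (a : F) (u v : 'rV[F]_n), f (a *: u + v) = a *: f u + f v,
      bijective f &
      forall u v, hamming (f u) (f v) = hamming u v].

Definition monomially_equivalent (a b : F) : Prop :=
  exists f : 'rV[F]_n -> 'rV[F]_n,
    isometry f /\
    forall C : {set 'rV[F]_n}, linear_code C ->
      (constacyclic a C <-> constacyclic b (f @: C)).

End Codes.

(** The diagonal monomial map [v |-> (lam^i v_i)_i] is an isometry that
    conjugates the [(c lam^n)]-constacyclic shift into [lam] times the
    [c]-constacyclic shift; since codes are closed under scaling, it maps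
    [(c lam^n)]-constacyclic codes exactly onto [c]-constacyclic ones.  It
    remains to write [xi^(m r)] as an [n]-th power: Bezout gives
    [m = gcd(n, q - 1) = -a n  (mod q - 1)] for some [a], and [xi] has order
    [q - 1]. *)
From Pilot Require Import Defs.
From mathcomp Require Import all_boot all_order all_algebra all_fingroup all_field.
From mathcomp Require Import ring.
Import GRing.Theory.
Local Open Scope ring_scope.

Section ConstacyclicImage.
Variables (F : finFieldType) (n : nat) (f : 'rV[F]_n -> 'rV[F]_n).
Hypothesis f_lin : forall (a : F) (u v : 'rV[F]_n), f (a *: u + v) = a *: f u + f v.

Let f0 : f 0 = 0.
Proof.
have := f_lin 1 0 0; rewrite !scale1r !addr0 => /esym/eqP.
by rewrite -{3}[f 0]addr0 (inj_eq (addrI _)) => /eqP.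
Qed.

Let fZ (a : F) (v : 'rV[F]_n) : f (a *: v) = a *: f v.
Proof. by rewrite -[a *: v]addr0 f_lin f0 addr0. Qed.

Lemma linear_codeZ (C : {set 'rV[F]_n}) (a : F) (v : 'rV[F]_n) :
  linear_code C -> v \in C -> a *: v \in C.
Proof. by move=> [C0 Clin] vC; rewrite -[a *: v]addr0; apply: Clin. Qed.

Lemma linear_code_imset (C : {set 'rV[F]_n}) : linear_code C -> linear_code (f @: C).
Proof.
move=> [C0 Clin]; split; first by rewrite -f0 imset_f.
move=> a _ _ /imsetP[u uC ->] /imsetP[v vC ->].
by rewrite -f_lin imset_f //; apply: Clin.
Qed.

Lemma constacyclic_imset (a b mu : F) (C : {set 'rV[F]_n}) :
  injective f -> mu != 0 ->
  (forall v, constashift b (f v) = mu *: f (constashift a v)) ->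
  linear_code C -> (constacyclic a C <-> constacyclic b (f @: C)).
Proof.
move=> f_inj mu_neq0 f_shift Clin; split=> [[_ Cshift] | [_ fCshift]].
  split; first exact: linear_code_imset.
  move=> _ /imsetP[v vC ->]; rewrite f_shift -fZ imset_f //.
  by apply: linear_codeZ => //; apply: Cshift.
split=> // v vC; have /imsetP[w wC fw] := fCshift _ (imset_f f vC).
have -> : constashift a v = mu^-1 *: w.
  by apply: f_inj; rewrite fZ -fw f_shift scalerA mulVf ?scale1r.
exact: linear_codeZ.
Qed.

End ConstacyclicImage.

Section Twist.
Variables (F : finFieldType) (n : nat).

Definition twist (lam : F) (v : 'rV[F]_n) : 'rV[F]_n :=
  \row_(i < n) (lam ^+ i * v 0 i).

Lemma twistP (lam a : F) (u v : 'rV[F]_n) :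
  twist lam (a *: u + v) = a *: twist lam u + twist lam v.
Proof. by apply/matrixP=> i j; rewrite !mxE mulrDr mulrCA. Qed.

Lemma twistM (lam mu : F) (v : 'rV[F]_n) : twist lam (twist mu v) = twist (lam * mu) v.
Proof. by apply/matrixP=> i j; rewrite !mxE mulrA exprMn. Qed.

Lemma twist1 (v : 'rV[F]_n) : twist 1 v = v.
Proof. by apply/matrixP=> i j; rewrite !mxE ord1 expr1n mul1r. Qed.

Lemma val_ord_pred (j : 'I_n) : ord_pred j = (if j == 0 :> nat then n.-1 else j.-1)%N :> nat.
Proof.
have n_gt0 : (0 < n)%N by apply: leq_ltn_trans (ltn_ord j).
case: j => [[|j] lt_jn] /=; first by rewrite add0n modn_small // prednK.
by rewrite modnDr modn_small // ltnW.
Qed.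

Variable lam : F.
Hypothesis lam_neq0 : lam != 0.

Lemma twistK : cancel (twist lam) (twist lam^-1).
Proof. by move=> v; rewrite twistM mulVf // twist1. Qed.

Lemma twist_bij : bijective (twist lam).
Proof.
exists (twist lam^-1); first exact: twistK.
by move=> v; rewrite twistM mulfV // twist1.
Qed.

Lemma hamming_twist (u v : 'rV[F]_n) : hamming (twist lam u) (twist lam v) = hamming u v.
Proof.
apply: eq_card => i; rewrite !inE !mxE.
by rewrite (inj_eq (mulfI (expf_neq0 _ lam_neq0))).
Qed.

(* Unqualified, [isometry] would be MathComp's sesquilinear-form notion. *)
Lemma twist_isometry : Defs.isometry (twist lam).
Proof. by split; [exact: twistP | exact: twist_bij | exact: hamming_twist]. Qed.

Lemma constashift_twist (c : F) (v : 'rV[F]_n) :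
  constashift c (twist lam v) = lam^-1 *: twist lam (constashift (c * lam ^+ n) v).
Proof.
apply/matrixP=> i j; have n_gt0 : (0 < n)%N by apply: leq_ltn_trans (ltn_ord j).
rewrite !mxE val_ord_pred; case: ifP => [/eqP -> | /negbT j_neq0].
  have lam_n : lam ^+ n = lam * lam ^+ n.-1 by rewrite -exprS prednK.
  by rewrite lam_n; field.
have lam_j : lam ^+ j = lam * lam ^+ j.-1 by rewrite -exprS prednK // lt0n.
by rewrite lam_j; field.
Qed.

Lemma monomially_equivalent_twist (c : F) : monomially_equivalent n (c * lam ^+ n) c.
Proof.
exists (twist lam); split=> [|C Clin]; first exact: twist_isometry.
apply: (@constacyclic_imset F n _ (twistP lam) _ _ lam^-1) => //.
- exact: bij_inj twist_bij.
- by rewrite invr_eq0.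
- exact: constashift_twist.
Qed.

End Twist.

Lemma prim_expr_gcdn {R : nzRingType} {k : nat} {xi : R} (n : nat) :
  k.-primitive_root xi -> exists e, xi ^+ gcdn n k = xi ^+ e ^+ n.
Proof.
move=> prim_xi; have k_gt0 := prim_order_gt0 prim_xi.
have [a _ k_dvd] := Bezoutl n k_gt0; exists (k.-1 * a)%N.
rewrite -exprM -(prim_expr_mod prim_xi) -[RHS](prim_expr_mod prim_xi) gcdnC.
congr (_ ^+ _); apply/eqP; rewrite -(eqn_modDr (a * n)) (eqP k_dvd).
by rewrite -mulnA -mulSnr prednK // modnMr.
Qed.

(* Only the order of [xi] and [gcdn n q.-1 = m] are used. *)
Theorem corollary3p6 (F : finFieldType) (q : nat) (xi : F) (n m : nat) :
  #|F| = q ->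
  (q.-1).-primitive_root xi ->
  (0 < n)%N -> (0 < m)%N ->
  coprime n q -> gcdn n q.-1 = m ->
  forall r : nat, (0 < r)%N ->
    monomially_equivalent n (xi ^+ (m * r)) 1.
Proof.
move=> _ prim_xi _ _ _ gcd_m r _.
have [e xi_m] := prim_expr_gcdn n prim_xi.
have xi_neq0 : xi != 0 by rewrite (prim_root_eq0 prim_xi) -lt0n (prim_order_gt0 prim_xi).
have -> : xi ^+ (m * r) = 1 * (xi ^+ e ^+ r) ^+ n.
  by rewrite mul1r -gcd_m exprM xi_m -!exprM mulnAC mulnA.
by apply: monomially_equivalent_twist; rewrite !expf_neq0.
Qed.
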